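(* Let $S$ be a submonoid of $\mathbb N^d$ and $\mathbf b\in S\setminus\{0\}$. Then $\mathrm{PF}(S)\neq\varnothing$ if and only if $\mathrm{maximals}_{\preceq_S}\mathrm{Ap}(S,\mathbf b)\neq\varnothing$. In this case $\mathrm{PF}(S)=\{\mathbf a-\mathbf b:\mathbf a\in\mathrm{maximals}_{\preceq_S}\mathrm{Ap}(S,\mathbf b)\}$.
   Context: $\mathrm{pos}(S)$ is the set of finite nonnegative rational linear combinations of elements of $S$; $\mathcal H(S)=(\mathrm{pos}(S)\setminus S)\cap\mathbb N^d$; $\mathrm{PF}(S)=\{\mathbf a\in\mathcal H(S):\mathbf a+(S\setminus\{0\})\subseteq S\}$. For $\mathbf b\in S\setminus\{0\}$, $\mathrm{Ap}(S,\mathbf b)=\{\mathbf a\in S:\mathbf a-\mathbf b\in\mathrm{pos}(S)\setminus S\}$. The partial order $\preceq_S$ on $\mathbb N^d$ is given by $\mathbf x\preceq_S\mathbf y$ iff $\mathbf y-\mathbf x\in S$, and $\mathrm{maximals}_{\preceq_S}X$ is the set of maximal elements of $X$ for this order. *)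

(* Points of Z^d are row vectors 'rV[int]_d; N^d is the set of
   those with nonnegative entries; pos(S) lives in Q^d = 'rV[rat]_d. *)
From mathcomp Require Import all_boot all_order all_algebra.
Set Implicit Arguments. Unset Strict Implicit. Unset Printing Implicit Defensive.
Import Order.TTheory GRing.Theory Num.Theory.
Local Open Scope ring_scope.

Definition toQ (d : nat) (x : 'rV[int]_d) : 'rV[rat]_d :=
  map_mx (fun z : int => z%:~R) x.

Definition inNd (d : nat) (x : 'rV[int]_d) : Prop := forall i, 0 <= x 0 i.

Definition submonoid_Nd (d : nat) (S : 'rV[int]_d -> Prop) : Prop :=
  [/\ forall x, S x -> inNd x, S 0 & forall x y, S x -> S y -> S (x + y)].

Definition pos (d : nat) (S : 'rV[int]_d -> Prop) (q : 'rV[rat]_d) : Prop :=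
  exists (n : nat) (c : 'I_n -> rat) (v : 'I_n -> 'rV[int]_d),
    [/\ forall i, 0 <= c i, forall i, S (v i) & q = \sum_(i < n) c i *: toQ (v i)].

Definition holes (d : nat) (S : 'rV[int]_d -> Prop) (a : 'rV[int]_d) : Prop :=
  [/\ pos S (toQ a), ~ S a & inNd a].

Definition PF (d : nat) (S : 'rV[int]_d -> Prop) (a : 'rV[int]_d) : Prop :=
  holes S a /\ forall s, S s -> s != 0 -> S (a + s).

Definition Ap (d : nat) (S : 'rV[int]_d -> Prop) (b a : 'rV[int]_d) : Prop :=
  [/\ S a, pos S (toQ (a - b)) & ~ S (a - b)].

Definition precS (d : nat) (S : 'rV[int]_d -> Prop) (x y : 'rV[int]_d) : Prop :=
  S (y - x).

Definition maximals (T : Type) (R : T -> T -> Prop) (X : T -> Prop) (x : T) : Prop :=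
  X x /\ forall y, X y -> R x y -> y = x.

From mathcomp Require Import all_boot all_order all_algebra.
From Stdlib Require Import Classical.
Set Implicit Arguments. Unset Strict Implicit. Unset Printing Implicit Defensive.
Import Order.TTheory GRing.Theory Num.Theory.
Local Open Scope ring_scope.

(* Shifting by b is a bijection from PF(S) onto the maximal elements of
   Ap(S, b).  If x is a pseudo-Frobenius element then x + b lies in Ap(S, b),
   and any y above it with y - (x + b) = s != 0 would give y - b = x + s in S.
   Conversely, if a is maximal and a - b + s were not in S for some nonzero
   s in S, then a + s would be an element of Ap(S, b) strictly above a. *)

Lemma toQD (d : nat) (x y : 'rV[int]_d) : toQ (x + y) = toQ x + toQ y.
Proof. by apply/rowP => i; rewrite !mxE intrD. Qed.

Lemma posD (d : nat) (S : 'rV[int]_d -> Prop) p q :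
  pos S p -> pos S q -> pos S (p + q).
Proof.
move=> [n1 [c1 [v1 [c1p v1S ->]]]] [n2 [c2 [v2 [c2p v2S ->]]]].
exists (n1 + n2)%N.
exists (fun i => match split i with inl j => c1 j | inr k => c2 k end).
exists (fun i => match split i with inl j => v1 j | inr k => v2 k end).
split; [by move=> i; case: (split i) | by move=> i; case: (split i) |].
rewrite big_split_ord /=; congr (_ + _); apply: eq_bigr => i _.
- by rewrite (unsplitK (inl i)).
- by rewrite (unsplitK (inr i)).
Qed.

Lemma pos_toQ (d : nat) (S : 'rV[int]_d -> Prop) s : S s -> pos S (toQ s).
Proof.
by move=> Ss; exists 1%N, (fun _ => 1), (fun _ => s); rewrite big_ord1 scale1r.
Qed.

Lemma pos_inNd (d : nat) (S : 'rV[int]_d -> Prop) x :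
  submonoid_Nd S -> pos S (toQ x) -> inNd x.
Proof.
move=> [SN _ _] [n [c [v [cp vS E]]]] i.
have : (0 : rat) <= toQ x 0 i.
  rewrite E summxE; apply: sumr_ge0 => j _.
  by rewrite !mxE; apply: mulr_ge0 => //; rewrite ler0z; apply: SN.
by rewrite mxE ler0z.
Qed.

Section PseudoFrobeniusApery.

Variables (d : nat) (S : 'rV[int]_d -> Prop) (b : 'rV[int]_d).
Hypotheses (Sb : S b) (b_neq0 : b != 0).

Lemma PF_addr_maximal_Ap x : PF S x -> maximals (precS S) (Ap S b) (x + b).
Proof.
move=> [[px nSx _] PFx]; split; first by split; rewrite ?addrK //; apply: PFx.
move=> y [_ _ nSyb] Sya; have [/eqP|s_neq0] := eqVneq (y - (x + b)) 0.
  by rewrite subr_eq0 => /eqP.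
case: nSyb; have -> : y - b = x + (y - (x + b)).
  by rewrite opprD addrCA (addrA x) subrr add0r.
exact: PFx.
Qed.

Lemma maximal_Ap_subr_PF a :
  submonoid_Nd S -> maximals (precS S) (Ap S b) a -> PF S (a - b).
Proof.
move=> HS [[Sa pa nSa] amax]; split; first by split => //; apply: pos_inNd pa.
move=> s Ss s_neq0; apply: NNPP => nSabs; move/eqP: s_neq0; apply.
have Ap_as : Ap S b (a + s).
  case: HS => _ _ SD; split; first exact: SD.
    by rewrite addrAC toQD; apply: posD => //; apply: pos_toQ.
  by rewrite addrAC.
have above_a : precS S a (a + s) by rewrite /precS addrC addKr.
have /(f_equal (fun z => z - a)) := amax _ Ap_as above_a.
by rewrite subrr addrC addKr.
Qed.

Lemma PF_maximal_ApE x :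
  submonoid_Nd S ->
  PF S x <-> exists2 a, maximals (precS S) (Ap S b) a & x = a - b.
Proof.
move=> HS; split=> [PFx | [a amax ->]]; last exact: maximal_Ap_subr_PF.
by exists (x + b); [apply: PF_addr_maximal_Ap | rewrite addrK].
Qed.

End PseudoFrobeniusApery.

Theorem proposition3p7 (d : nat) (S : 'rV[int]_d -> Prop) (b : 'rV[int]_d) :
  submonoid_Nd S -> S b -> b != 0 ->
  ((exists a, PF S a) <-> (exists a, maximals (precS S) (Ap S b) a)) /\
  ((exists a, PF S a) ->
     forall x, PF S x <-> exists2 a, maximals (precS S) (Ap S b) a & x = a - b).
Proof.
move=> HS Sb b_neq0; have PFE := PF_maximal_ApE Sb b_neq0 _ HS.
split=> [|_ x]; last exact: PFE.
split=> [[x /PFE [a amax _]] | [a amax]]; first by exists a.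
by exists (a - b); apply/PFE; exists a.
Qed.
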